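(* Let $\eta>0$ and let $\mathcal{H}$ be the Paley-Wiener space on $\mathbb{R}^d$ with parameter $\eta$ (functions in $\mathcal{L}^2(\mathbb{R}^d)$ whose Fourier transform is supported in $[-\eta,\eta]^d$), and let $f_*\in\mathcal{H}$. Let $K\ge 2$, $\gamma\in(0,1)$, and let $C_1,\dots,C_K\subseteq\mathcal{H}$ be random confidence regions such that $\mathbb{P}(f_*\in C_k)\ge 1-\gamma$ for every $k\in\{1,\dots,K\}$. For each $k$ and each $x\in\mathbb{R}^d$ let $$I_1^{(k)}(x)=\min_{f\in C_k} f(x),\qquad I_2^{(k)}(x)=\max_{f\in C_k} f(x)$$ (assumed to exist). Let $w=(w_1,\dots,w_K)\in[0,1]^K$ with $\sum_{k=1}^K w_k=1$ be fixed weights, and for each $x_0\in\mathbb{R}^d$ define the per-input majority-vote set $$\mathcal{C}(w,1/2,x_0)\doteq\Big\{y\in\mathbb{R}:\ \sum_{k=1}^K w_k\,\mathbb{I}\big(y\in[I_1^{(k)}(x_0),I_2^{(k)}(x_0)]\big)>1/2\Big\}.$$ Then the resulting band has simultaneous coverage: $$\mathbb{P}\big(\forall x_0\in\mathbb{R}^d:\ f_*(x_0)\in\mathcal{C}(w,1/2,x_0)\big)\ge 1-2\gamma.$$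
   Context: In the paper, $C_k$ is the Paley-Wiener kernel-based confidence region for the unknown regression function $f_*$ built from the $k$-th random subsample (random permutation) of an i.i.d. input-output sample, with $\gamma=\alpha+\beta$; $[I_1^{(k)}(x),I_2^{(k)}(x)]$ is the resulting confidence interval for $f_*(x)$ at query input $x$. $\mathbb{I}$ denotes the indicator function. The case of equal weights $w_k=1/K$ is the standard majority vote. *)

From HB Require Import structures.
From mathcomp Require Import all_boot all_order all_algebra.
From mathcomp Require Import all_classical all_reals all_analysis.
Set Implicit Arguments. Unset Strict Implicit. Unset Printing Implicit Defensive.
Import Order.TTheory GRing.Theory Num.Theory.
Local Open Scope classical_set_scope.
Local Open Scope ring_scope.

(* Iterated Lebesgue integral over D^n (D a subset of R) of a function of the
   first n coordinates of a sequence; [a] is the accumulator of already-fixed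
   coordinates. Coordinate n-1 is integrated outermost. *)
Fixpoint iter_int (R : realType) (D : set R) (n : nat)
  (F : (nat -> R) -> \bar R) (a : nat -> R) : \bar R :=
  match n with
  | 0 => F a
  | n'.+1 => (\int[@lebesgue_measure R]_(t in D)
                iter_int D n' F (fun i => if i == n' then t else a i))%E
  end.

Definition int_pow (R : realType) (D : set R) (d : nat)
  (G : 'rV[R]_d -> \bar R) : \bar R :=
  iter_int D d (fun a => G (\row_(i < d) a (nat_of_ord i))) (fun _ => 0).

Definition dotv (R : realType) (d : nat) (u v : 'rV[R]_d) : R :=
  \sum_(i < d) u 0 i * v 0 i.

Definition sym_itv (R : realType) (eta : R) : set R := `[- eta, eta].

(* Paley-Wiener space with parameter eta on R^d (real-valued functions):
   f is square integrable on R^d and f is the inverse Fourier transform of a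
   function g = a + i b that is square integrable on [-eta,eta]^d and vanishes
   outside it, i.e. f(x) = int_{[-eta,eta]^d} g(w) e^{i w.x} dw (the
   normalising constant is absorbed into g); the imaginary part of this
   integral vanishes since f is real-valued. *)
Definition paley_wiener (R : realType) (d : nat) (eta : R)
  : set ('rV[R]_d -> R) :=
  [set f | (int_pow setT (fun x => ((f x) ^+ 2)%:E) < +oo)%E /\
     exists a b : 'rV[R]_d -> R,
       (int_pow (sym_itv eta) (fun w => ((a w) ^+ 2 + (b w) ^+ 2)%:E) < +oo)%E /\
       (forall x, (f x)%:E =
          int_pow (sym_itv eta) (fun w =>
            (a w * cos (dotv w x) - b w * sin (dotv w x))%:E)) /\
       (forall x, 0%E =
          int_pow (sym_itv eta) (fun w =>
            (a w * sin (dotv w x) + b w * cos (dotv w x))%:E))].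

Definition in_itv_ind (R : realType) (l u y : R) : R :=
  (((l <= y) && (y <= u)) : nat)%:R.

Definition vote_set (R : realType) (K : nat) (w : 'I_K -> R) (tau : R)
  (I1 I2 : 'I_K -> R) : set R :=
  [set y | \sum_(k < K) w k * in_itv_ind (I1 k) (I2 k) y > tau].

From HB Require Import structures.
From mathcomp Require Import all_boot all_order all_algebra.
From mathcomp Require Import all_classical all_reals all_analysis.
From mathcomp Require Import lra measurable_realfun.

(* If f_*(x0) lies outside the majority-vote set at some x0, then the
   regions C_k missing f_* carry total weight at least 1/2: every region
   containing f_* yields an interval containing f_*(x0). The missed weight
   W = sum_k w_k 1{f_* notin C_k} has mean at most gamma, so Markov's
   inequality gives P(W >= 1/2) <= 2 gamma. *)

Set Implicit Arguments.
Unset Strict Implicit.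
Unset Printing Implicit Defensive.

Import Order.TTheory GRing.Theory Num.Theory.
Local Open Scope classical_set_scope.
Local Open Scope ring_scope.

Lemma not_vote_set_missed_weight (R : realType) (K : nat) (w : 'I_K -> R) (tau : R)
    (I1 I2 : 'I_K -> R) (y : R) :
  \sum_(k < K) w k = 1 -> ~ vote_set w tau I1 I2 y ->
  1 - tau <= \sum_(k < K) w k * (1 - in_itv_ind (I1 k) (I2 k) y).
Proof.
rewrite /vote_set /= => w1 /negP; rewrite -leNgt => le_vote_tau.
under eq_bigr do rewrite mulrBr mulr1.
by rewrite sumrB w1 lerB.
Qed.

Lemma in_itv_indE1 (R : realType) (l u y : R) :
  l <= y <= u -> in_itv_ind l u y = 1.
Proof. by rewrite /in_itv_ind => ->. Qed.

Lemma onem_in_itv_ind_le (R : realType) (l u y : R) (b : bool) :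
  (~~ b -> l <= y <= u) -> 1 - in_itv_ind l u y <= b%:R.
Proof.
case: b => [_|/(_ isT)/in_itv_indE1->]; last by rewrite subrr.
by rewrite lerBlDr lerDl /in_itv_ind ler0n.
Qed.

Section weighted_indicators.
Context d (T : measurableType d) (R : realType) (mu : {measure set T -> \bar R}).
Variables (K : nat) (w : 'I_K -> R) (E : 'I_K -> set T).
Hypotheses (w_ge0 : forall k, 0 <= w k) (mE : forall k, measurable (E k)).

Lemma integral_sum_indic :
  (\int[mu]_(x in setT) (\sum_(k < K) w k * \1_(E k) x)%:E =
   \sum_(k < K) (w k)%:E * mu (E k))%E.
Proof.
under eq_integral do rewrite -sumEFin.
rewrite ge0_integral_sum //; last first.
- by move=> k x _; rewrite lee_fin mulr_ge0.
- by move=> k; apply/measurable_EFinP/measurable_funM.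
apply: eq_bigr => k _.
under eq_integral do rewrite EFinM.
rewrite ge0_integralZl_EFin //; last exact/measurable_EFinP/measurable_indic.
by rewrite integral_indic // setIT.
Qed.

Lemma le_measure_sum_indic (B : set T) (c : R) : measurable B -> 0 <= c ->
  (forall x, B x -> c <= \sum_(k < K) w k * \1_(E k) x) ->
  (c%:E * mu B <= \sum_(k < K) (w k)%:E * mu (E k))%E.
Proof.
move=> mB c_ge0 le_c_sum.
rewrite -integral_sum_indic -(setIT B) -integral_indic //.
rewrite -ge0_integralZl_EFin //; last exact/measurable_EFinP/measurable_indic.
apply: ge0_le_integral => //.
- by move=> x _; rewrite -EFinM lee_fin mulr_ge0.
- exact/measurable_funeM/measurable_EFinP/measurable_indic.
- apply/measurable_EFinP/measurable_sum => k.
  exact/measurable_funM/measurable_indic.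
move=> x _; rewrite -EFinM lee_fin indicE.
have [Bx|nBx] := boolP (x \in B).
  by rewrite mulr1 le_c_sum // -in_setE.
by rewrite mulr0 sumr_ge0 // => k _; rewrite mulr_ge0.
Qed.

End weighted_indicators.

Lemma probability_setC_le d (T : measurableType d) (R : realType)
    (P : probability T R) (A : set T) (r : R) : measurable A ->
  (P (~` A) <= r%:E)%E = ((1 - r)%:E <= P A)%E.
Proof.
move=> mA; rewrite probability_setC //.
have : (0 <= P A <= 1)%E by rewrite measure_ge0 probability_le1.
case: (P A) => [p||] /andP[] //; rewrite -EFinD !lee_fin => _ _.
by apply/idP/idP => ?; lra.
Qed.

Theorem mainTheorem2 (R : realType) (d : nat) (eta : R)
  (dT : measure_display) (T : measurableType dT) (P : probability T R)
  (fstar : 'rV[R]_d -> R) (K : nat) (gamma : R)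
  (C : 'I_K -> T -> set ('rV[R]_d -> R))
  (I1 I2 : T -> 'I_K -> 'rV[R]_d -> R) (w : 'I_K -> R) :
  0 < eta ->
  paley_wiener eta fstar ->
  (2 <= K)%N ->
  0 < gamma < 1 ->
  (forall k om, C k om `<=` paley_wiener eta) ->
  (forall k, measurable [set om | C k om fstar]) ->
  (forall k, (P [set om | C k om fstar] >= (1 - gamma)%:E)%E) ->
  (forall om k x, (exists2 f, C k om f & f x = I1 om k x) /\
                  (forall f, C k om f -> I1 om k x <= f x)) ->
  (forall om k x, (exists2 f, C k om f & f x = I2 om k x) /\
                  (forall f, C k om f -> f x <= I2 om k x)) ->
  (forall k, 0 <= w k <= 1) ->
  \sum_(k < K) w k = 1 ->
  measurable [set om | forall x0,
     vote_set w (1 / 2) (fun k => I1 om k x0) (fun k => I2 om k x0) (fstar x0)] ->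
  (P [set om | forall x0,
     vote_set w (1 / 2) (fun k => I1 om k x0) (fun k => I2 om k x0) (fstar x0)]
   >= (1 - 2 * gamma)%:E)%E.
Proof.
move=> _ _ _ _ _ mC PC hI1 hI2 w01 w1 mA.
set A := [set om | _ ].
pose N k := ~` [set om | C k om fstar].
have w_ge0 k : 0 <= w k by case/andP: (w01 k).
have PN k : (P (N k) <= gamma%:E)%E by rewrite probability_setC_le.
have sum_PN : (\sum_(k < K) (w k)%:E * P (N k) <= gamma%:E)%E.
  apply: (@le_trans _ _ (\sum_(k < K) (w k * gamma)%:E)%E).
    by apply: lee_sum => k _; rewrite EFinM lee_wpmul2l ?lee_fin.
  by rewrite sumEFin -mulr_suml w1 mul1r.
have missed_weight om : (~` A) om -> 2^-1 <= \sum_(k < K) w k * \1_(N k) om.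
  case/existsNP=> x0 /(not_vote_set_missed_weight w1); rewrite div1r.
  have -> : 1 - 2^-1 = 2^-1 :> R by rewrite {1}(splitr 1) div1r addrK.
  move/le_trans; apply; apply: ler_sum => k _; rewrite ler_wpM2l // indicE.
  apply: onem_in_itv_ind_le; rewrite notin_setE => /contrapT Ck.
  by rewrite (hI1 om k x0).2 ?(hI2 om k x0).2.
have half_ge0 : 0 <= 2^-1 :> R by rewrite invr_ge0.
have := le_measure_sum_indic P w_ge0 (fun k => measurableC (mC k))
  (measurableC mA) half_ge0 missed_weight.
move=> /le_trans/(_ sum_PN); rewrite lee_pdivrMl // -EFinM.
by rewrite probability_setC_le.
Qed.
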